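(* Let $\lambda\in\mathcal{X}(T)^+$ and $\mu\in\Pi_G^+(\lambda)$. Let $\alpha\in\operatorname{Supp}(\lambda)$ be such that $\langle\lambda-\mu,\alpha^\vee\rangle>r_\alpha$, let $S(\alpha)$ be the connected component containing $\alpha$ of $(\Delta(\alpha)\smallsetminus\operatorname{Supp}(\mu))\cup\{\alpha\}$, and fix an extremal root $\beta$ of $S(\alpha)$. Write $I(\alpha,\beta)=\{\gamma_0,\dots,\gamma_k\}$ with $k=d(\alpha,\beta)$, $\gamma_0=\alpha$ and $\langle\gamma_i,\gamma_{i-1}^\vee\rangle\neq0$ for $i=1,\dots,k$, and let $c_i$ be the coefficient of $\gamma_i$ in the expression of $\lambda-\mu\in\mathbb{Q}[\Delta]$ as a linear combination of simple roots. Then: (i) setting $c_{k+1}=0$, for every $i\leqslant k$ one has $c_i\geqslant\dfrac{(i+1)c_{i+1}+r_\alpha+1}{i+2}$; (ii) for every $i\leqslant k$ one has $c_i\geqslant k-i+1+\dfrac{r_\alpha-k-1}{i+2}$.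
   Context: $G$ is a connected semisimple group over an algebraically closed field of characteristic zero, $T\subset B$ a maximal torus and Borel subgroup, $\Delta$ the simple roots, $\mathcal{X}(T)^+$ the dominant characters. $\Pi_G^+(\lambda)=\{\mu\in\mathcal{X}(T)^+:\lambda-\mu\in\mathbb{Q}_{\geq0}[\Delta]\}$. $\operatorname{Supp}(\lambda)=\{\alpha\in\Delta:\langle\lambda,\alpha^\vee\rangle\neq0\}$. For $\alpha\in\Delta$, $\Delta(\alpha)$ is the connected component of the Dynkin diagram containing $\alpha$ and $r_\alpha=|\Delta(\alpha)|$; for $\beta\in\Delta(\alpha)$, $d(\alpha,\beta)$ is the distance in the Dynkin diagram and $I(\alpha,\beta)$ is the minimal connected subset of $\Delta$ containing $\alpha$ and $\beta$. Connected components of subsets of $\Delta$ refer to the Dynkin diagram. An extremal root of a subset $I\subset\Delta$ is an element of $I$ adjacent in the Dynkin diagram to at most one other element of $I$. *)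

(* Root-datum data of a semisimple group, encoded by its
   Cartan matrix; weights are expressed in coordinates w.r.t. the simple
   roots (X(T) (x) Q = Q[Delta] since G is semisimple). *)
From mathcomp Require Import all_boot all_order all_algebra.
Set Implicit Arguments. Unset Strict Implicit. Unset Printing Implicit Defensive.
Import Order.TTheory GRing.Theory Num.Theory.
Local Open Scope ring_scope.

Section Defs.
Variables (D : finType) (C : D -> D -> int).
(* Convention: C a b = <a, b^vee>. *)

(* C is a Cartan matrix of finite type (= of a reduced root system, i.e.
   of a semisimple group): diagonal 2, off-diagonal <= 0, symmetrizable
   with positive definite symmetrization. Here d b plays (b,b)/2. *)
Definition is_cartan : Prop :=
  (forall a, C a a = 2) /\ (forall a b, a != b -> C a b <= 0) /\
  exists d : D -> rat, (forall a, 0 < d a) /\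
    (forall a b, (C a b)%:~R * d b = (C b a)%:~R * d a) /\
    (forall x : D -> rat, (exists a, x a != 0) ->
       0 < \sum_a \sum_b x a * x b * (C a b)%:~R * d b).

Definition wpairing (x : D -> rat) (a : D) : rat :=
  \sum_b x b * (C b a)%:~R.

Definition dominant (x : D -> rat) : Prop :=
  forall a, exists n : nat, wpairing x a = n%:R.

Definition in_Pi (lam mu : D -> rat) : Prop :=
  dominant mu /\ forall a, 0 <= lam a - mu a.

Definition wsupp (x : D -> rat) : {set D} := [set a | wpairing x a != 0].

Definition dyn_adj : rel D := fun a b => (a != b) && (C a b != 0).

Definition dyn_comp (a : D) : {set D} := [set b | connect dyn_adj a b].
Definition rk (a : D) : nat := #|dyn_comp a|.

Definition restr_adj (A : {set D}) : rel D :=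
  fun x y => [&& dyn_adj x y, x \in A & y \in A].

Definition comp_in (A : {set D}) (a : D) : {set D} :=
  [set b | connect (restr_adj A) a b].

Definition extremal (I : {set D}) (b : D) : bool :=
  (b \in I) && (#|[set g in I | dyn_adj b g]| <= 1)%N.

Definition connected_set (I : {set D}) : Prop :=
  forall a b, a \in I -> b \in I -> connect (restr_adj I) a b.

Definition min_conn_set (I : {set D}) (a b : D) : Prop :=
  [/\ a \in I, b \in I, connected_set I &
    forall J : {set D}, J \subset I -> a \in J -> b \in J ->
      connected_set J -> J = I].

Definition dist_is (a b : D) (k : nat) : Prop :=
  (exists p : seq D, [/\ size p = k, path dyn_adj a p & last a p = b]) /\
  (forall p : seq D, path dyn_adj a p -> last a p = b -> (k <= size p)%N).
End Defs.

(* The simple roots gamma_0 = alpha, ..., gamma_k = beta form the unique path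
   from alpha to beta in the Dynkin diagram, which is a forest because the
   Cartan matrix is positive definite.  Since S(alpha) is connected and contains
   alpha and beta, the whole path lies in S(alpha), so <mu, gamma_i^vee> = 0 for
   i >= 1; moreover the k + 1 roots gamma_i lie in Delta(alpha), so k < r_alpha.
   As lambda - mu has nonnegative coefficients c_i,
     <lambda - mu, gamma_i^vee> <= 2 c_i - c_(i-1) - c_(i+1),
   and the left-hand side is >= 0 for i >= 1 (lambda is dominant) and
   >= r_alpha + 1 for i = 0 (it is an integer > r_alpha).  Thus c is concave
   along the path with a steep start: bound (i) follows by induction upwards
   from i = 0, and it yields c_(i+1) >= k - i by induction downwards from
   c_(k+1) = 0, which gives bound (ii). *)

From mathcomp Require Import all_boot all_order all_algebra.
From mathcomp Require Import ring lra zify.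
Import Order.TTheory GRing.Theory Num.Theory.
Local Open Scope ring_scope.
Set Implicit Arguments. Unset Strict Implicit.

Lemma nat_gap (P : pred nat) n j : P 0%N -> P n -> (j <= n)%N -> ~~ P j ->
  exists i l, [/\ (i < j < l)%N, (l <= n)%N, P i, P l &
                 forall m, (i < m < l)%N -> ~~ P m].
Proof.
move=> P0 Pn jn Pj.
have j_gt0 : (0 < j)%N by case: j Pj {jn} => //; rewrite P0.
have j_lt_n : (j < n)%N by rewrite ltn_neqAle jn andbT; apply: contraNneq Pj => ->.
have ex_below : exists m, (m < j)%N && P m by exists 0%N; rewrite j_gt0 P0.
have below_j m : (m < j)%N && P m -> (m <= j)%N by case/andP => /ltnW.
have [i /andP [ij Pi] i_max] := ex_maxnP ex_below below_j.
have ex_above : exists m, [&& (j < m)%N, (m <= n)%N & P m] by exists n; rewrite j_lt_n leqnn.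
have [l /and3P [jl ln Pl] l_min] := ex_minnP ex_above.
exists i, l; split; rewrite ?ij ?jl //.
move=> m /andP [im ml]; apply/negP => Pm.
case: (ltngtP m j) => [mj|jm|mj]; last by rewrite -mj Pm in Pj.
- by have := i_max m; rewrite mj Pm leqNgt im => /(_ isT).
- by have := l_min m; rewrite jm Pm (leq_trans (ltnW ml) ln) leqNgt ml => /(_ isT).
Qed.

Section Chains.
Variables (T : Type) (e : rel T) (g : nat -> T).

Lemma last_map_iota m n : last (g m) (map g (iota m.+1 n)) = g (m + n).
Proof. by elim: n m => [|n IHn] m; rewrite ?addn0 //= IHn addSnnS. Qed.

Lemma path_map_iota m n :
  (forall i, (m < i <= m + n)%N -> e (g i.-1) (g i)) ->
  path e (g m) (map g (iota m.+1 n)).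
Proof.
elim: n m => [//|n IHn] m e_g /=; apply/andP; split.
  by apply: (e_g m.+1); rewrite ltnSn addnS ltnS leq_addr.
by apply: IHn => i /andP [mi]; rewrite addSnnS => ?; apply: e_g; rewrite ltnW ?mi.
Qed.

End Chains.

Section CartanMatrix.
Variables (D : finType) (C : D -> D -> int).
Hypothesis HC : is_cartan C.

Lemma cartan_diag a : C a a = 2.
Proof. by case: HC. Qed.

Lemma cartan_offdiag_le0 a b : a != b -> C a b <= 0.
Proof. by case: HC => _ [+ _]; apply. Qed.

Lemma cartan_eq0_sym a b : (C a b == 0) = (C b a == 0).
Proof.
case: HC => _ [_ [d [d_gt0 [d_sym _]]]].
have d_neq0 x : d x != 0 by rewrite gt_eqF.
by rewrite -(intr_eq0 rat) -[RHS](intr_eq0 rat) -(mulIr_eq0 _ (mulIf (d_neq0 b)))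
  d_sym mulf_eq0 (negbTE (d_neq0 a)) orbF.
Qed.

Lemma dyn_adj_sym : symmetric (dyn_adj C).
Proof. by move=> x y; rewrite /dyn_adj eq_sym cartan_eq0_sym. Qed.

Lemma cartan_adj_leN1 a b : dyn_adj C a b -> (C a b)%:~R <= -1 :> rat.
Proof.
case/andP=> ab Cab; have := cartan_offdiag_le0 ab.
rewrite le_eqVlt (negbTE Cab) /= => Cab_lt0.
have : C a b <= -1 by lia.
by rewrite -(ler_int rat).
Qed.

Lemma wpairing_le_nbhd (nu : D -> rat) b (s : seq D) :
  (forall x, 0 <= nu x) -> uniq s -> all (dyn_adj C ^~ b) s ->
  wpairing C nu b <= 2 * nu b - \sum_(x <- s) nu x.
Proof.
move=> nu_ge0 s_uniq s_adj.
have bs : b \notin s by apply/negP => /(allP s_adj); rewrite /dyn_adj eqxx.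
rewrite /wpairing (bigID (mem s)) /= -big_uniq //.
have le_s : \sum_(x <- s) nu x * (C x b)%:~R <= - \sum_(x <- s) nu x.
  rewrite -sumrN !big_seq ler_sum // => x /(allP s_adj) /cartan_adj_leN1.
  by have := nu_ge0 x; nra.
have le_ns : \sum_(x | x \notin s) nu x * (C x b)%:~R <= 2 * nu b.
  rewrite (bigD1 b) //= cartan_diag mulrC -[X in _ <= X]addr0 lerD //.
  apply: sumr_le0 => x /andP [_ xb].
  have := cartan_offdiag_le0 xb; rewrite -(ler_int rat) => ?.
  by have := nu_ge0 x; nra.
lra.
Qed.

Lemma dyn_min_degree2_set0 (V : {set D}) :
  (forall b, b \in V -> exists y z,
     [/\ y \in V, z \in V, y != z, dyn_adj C y b & dyn_adj C z b]) ->
  V = set0.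
Proof.
move=> nbhd2; apply/setP => v0; rewrite inE; apply/negP => v0V.
case: HC => _ [_ [d [d_gt0 [_ pos_def]]]].
pose x u : rat := (u \in V)%:R.
have x_ge0 u : 0 <= x u by rewrite ler0n.
have /pos_def : exists u, x u != 0 by exists v0; rewrite /x v0V oner_eq0.
(* each b in V has <x, b^vee> <= 2 - 2 for the indicator vector x of V *)
apply/negP; rewrite -leNgt exchange_big /=; apply: sumr_le0 => b _.
have -> : \sum_u x u * x b * (C u b)%:~R * d b = wpairing C x b * (x b * d b).
  by rewrite /wpairing mulr_suml; apply: eq_bigr => u _; ring.
rewrite /x; case: (boolP (b \in V)) => bV; last by rewrite mul0r mulr0.
have [y [z [yV zV yz yb zb]]] := nbhd2 b bV.
have := @wpairing_le_nbhd x b [:: y; z] x_ge0; rewrite /= inE yz yb zb.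
rewrite !big_cons big_nil /x yV zV bV => /(_ isT isT).
by have := d_gt0 b; nra.
Qed.

Lemma dyn_cycle_size (c : seq D) :
  uniq c -> cycle (dyn_adj C) c -> (size c <= 2)%N.
Proof.
move=> c_uniq c_cycle; rewrite leqNgt; apply/negP => c_gt2.
have : [set u in c] = set0.
  apply: dyn_min_degree2_set0 => b; rewrite inE => /rot_to [i s rot_c].
  have : cycle (dyn_adj C) (b :: s) by rewrite -rot_c rot_cycle.
  have : uniq (b :: s) by rewrite -rot_c rot_uniq.
  have : (2 <= size s)%N by rewrite -ltnS -[(size s).+1]/(size (b :: s)) -rot_c size_rot.
  have s_in u : u \in s -> u \in [set u in c].
    by move=> us; rewrite inE -(mem_rot i) rot_c inE us orbT.
  case: s {rot_c} s_in => [|y [|w t]] // s_in _.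
  rewrite [uniq _]/= !inE !negb_or -!andbA => /and4P [_ _ _ /and4P [y_w y_t _ _]].
  rewrite /cycle rcons_path => /andP [/andP [b_y _] t_b].
  have y_last : y != last w t.
    by apply: contraTneq (mem_last w t) => <-; rewrite inE negb_or y_w.
  exists y, (last w t); split => //.
  - by rewrite s_in ?mem_head.
  - by rewrite s_in // inE mem_last orbT.
  - by rewrite dyn_adj_sym.
by case: c {c_uniq c_cycle} c_gt2 => [//|v c'] _ /setP /(_ v); rewrite !inE eqxx.
Qed.
Lemma dyn_two_routes x y (q p : seq D) :
  path (dyn_adj C) x q -> last x q = y -> path (dyn_adj C) y p -> last y p = x ->
  uniq (q ++ p) -> (size q + size p <= 2)%N.
Proof.
move=> q_path q_last p_path p_last qp_uniq; rewrite -size_cat.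
apply: dyn_cycle_size; rewrite // (cycle_path x) last_cat q_last p_last.
by rewrite cat_path q_path q_last.
Qed.

Lemma restr_adj_sym A : symmetric (restr_adj C A).
Proof. by move=> x y; rewrite /restr_adj dyn_adj_sym (andbC (x \in A)). Qed.

Lemma restr_adj_sub A : subrel (restr_adj C A) (dyn_adj C).
Proof. by move=> x y /andP []. Qed.

Lemma restr_path_sub A x p : path (restr_adj C A) x p -> {subset p <= A}.
Proof.
elim: p x => //= y p IHp x /andP [/and3P [_ _ yA] y_path] z.
by rewrite inE => /orP [/eqP -> // | /(IHp y y_path)].
Qed.

Lemma comp_in_sub A x : comp_in C A x \subset x |: A.
Proof.
apply/subsetP => y; rewrite !inE => /connectP [p p_path ->].
have := mem_last x p; rewrite inE => /orP [-> // | /(restr_path_sub p_path) ->].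
by rewrite orbT.
Qed.

Lemma dyn_chain_connect (A : {set D}) (g : nat -> D) n :
  (forall i j, (i <= n)%N -> (j <= n)%N -> g i = g j -> i = j) ->
  (forall i, (0 < i <= n)%N -> dyn_adj C (g i.-1) (g i)) ->
  connect (restr_adj C A) (g 0%N) (g n) ->
  forall j, (j <= n)%N -> connect (restr_adj C A) (g 0%N) (g j).
Proof.
(* Otherwise the chain leaves the component between two indices i < l where it
   is inside; returning from g l to g i within the component closes a cycle. *)
set R := restr_adj C A => g_inj g_adj conn_n j jn; apply/idPn => conn_j.
have [i [l [/andP [ij jl] ln conn_i conn_l outside]]] :=
  nat_gap (P := fun m => connect R (g 0%N) (g m)) (connect0 _ _) conn_n jn conn_j.
have il := ltn_trans ij jl; have i_n := ltnW (leq_trans il ln).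
have /connectP [p0 p0_path p0_last] : connect R (g l) (g i).
  by apply: connect_trans conn_i; rewrite (sym_connect_sym (restr_adj_sym A)).
case: (shortenP p0_path) p0_last => p p_path /andP [gl_p p_uniq] p_sub p_last.
have {}p_uniq : uniq p := p_uniq.
have p_conn v : v \in p -> connect R (g 0%N) v.
  move=> /p_sub v_p0; apply: connect_trans conn_l _.
  by apply: (path_connect p0_path); rewrite inE v_p0 orbT.
have p_gt0 : (0 < size p)%N.
  case: p {p_path gl_p p_uniq p_sub p_conn} p_last => //= /(g_inj _ _ i_n ln) il_eq.
  by rewrite il_eq ltnn in il.
have l_eq : (i + (l - i))%N = l by rewrite subnKC // ltnW.
pose q := map g (iota i.+1 (l - i)).
have q_path : path (dyn_adj C) (g i) q.
  apply: path_map_iota => m; rewrite l_eq => /andP [im ml].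
  by apply: g_adj; rewrite (leq_trans ml ln) (leq_ltn_trans _ im).
have q_uniq : uniq q.
  rewrite map_inj_in_uniq ?iota_uniq // => x y; rewrite !mem_iota addSn l_eq !ltnS.
  by move=> /andP [_ xl] /andP [_ yl]; apply: g_inj; apply: leq_trans ln.
have qp_disjoint : ~~ has (mem q) p.
  apply/hasPn => v vp; apply/mapP => [[m]]; rewrite mem_iota addSn l_eq ltnS.
  rewrite [(m <= l)%N]leq_eqVlt => /andP [im /orP [/eqP -> v_gl | ml v_gm]].
    by rewrite -v_gl vp in gl_p.
  by move: (outside m); rewrite im ml -v_gm p_conn // => /(_ isT).
have := dyn_two_routes q_path _ (sub_path (@restr_adj_sub A) p_path) (esym p_last).
rewrite last_map_iota l_eq cat_uniq q_uniq qp_disjoint p_uniq size_map size_iota.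
have q_gt1 : (1 < l - i)%N by rewrite ltn_subRL addn1 (leq_ltn_trans ij jl).
by move=> /(_ erefl isT); rewrite leqNgt (leq_add q_gt1 p_gt0).
Qed.

Section MinimalChain.
Variables (a b : D) (k : nat) (g : nat -> D).
Hypotheses (g0 : g 0%N = a)
  (g_adj : forall i, (1 <= i <= k)%N -> C (g i) (g i.-1) != 0)
  (g_min : min_conn_set C [set g (nat_of_ord i) | i : 'I_k.+1] a b)
  (g_dist : dist_is C a b k).

Local Notation I := [set g (nat_of_ord i) | i : 'I_k.+1].

Lemma mem_chain i : (i <= k)%N -> g i \in I.
Proof. by move=> ik; apply/imsetP; exists (Ordinal (ik : i < k.+1)%N). Qed.

Lemma card_chain : #|I| = k.+1.
Proof.
apply/eqP; rewrite eqn_leq; apply/andP; split.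
  by rewrite -[X in (_ <= X)%N]card_ord leq_imset_card.
case: g_min => aI bI I_conn _; case: g_dist => _ dist_min.
have /connectP [p0 p0_path p0_last] := I_conn a b aI bI.
case: (shortenP p0_path) p0_last => p p_path p_uniq p_sub p_last.
have k_le_p : (k <= size p)%N.
  by apply: dist_min => //; apply: sub_path p_path; apply: restr_adj_sub.
apply: leq_trans (_ : size (a :: p) <= _)%N; first exact: k_le_p.
rewrite -(card_uniqP p_uniq); apply/subset_leq_card/subsetP => z.
by rewrite inE => /orP [/eqP -> // | /(restr_path_sub p_path)].
Qed.

Lemma chain_inj i j : (i <= k)%N -> (j <= k)%N -> g i = g j -> i = j.
Proof.
move=> ik jk gij.
have /imset_injP g_inj : #|I| == #|'I_k.+1| by rewrite card_chain card_ord.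
by have [] := g_inj (Ordinal (ik : i < k.+1)%N) (Ordinal (jk : j < k.+1)%N) isT isT gij.
Qed.

Lemma chain_adj i : (0 < i <= k)%N -> dyn_adj C (g i.-1) (g i).
Proof.
case: i => // i /= ik; rewrite /dyn_adj cartan_eq0_sym g_adj ?ik // andbT.
by apply/eqP => /(chain_inj (ltnW ik) ik) /n_Sn.
Qed.

Lemma chain_last : g k = b.
Proof.
case: g_min => _ /imsetP [m _ b_gm] _ _; case: g_dist => _ dist_min.
have := dist_min (map g (iota 1 m)); rewrite size_map size_iota -g0 b_gm last_map_iota add0n.
rewrite path_map_iota => [/(_ isT erefl) km|j]; last first.
  rewrite add0n => /andP [j_gt0 jm]; apply: chain_adj.
  by rewrite j_gt0 (leq_trans jm) // -ltnS.
by congr g; apply/eqP; rewrite eqn_leq km -ltnS ltn_ord.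
Qed.

Lemma chain_in_comp (B : {set D}) : b \in comp_in C (B :|: [set a]) a ->
  forall i, (0 < i <= k)%N -> g i \in B.
Proof.
rewrite inE -chain_last -[X in connect _ X _]g0 => b_conn i /andP [i_gt0 ik].
have gi_conn := dyn_chain_connect chain_inj chain_adj b_conn ik; rewrite g0 in gi_conn.
have gi_a : g i != a.
  by apply/eqP; rewrite -g0 => /(chain_inj ik (leq0n k)) i0; rewrite i0 in i_gt0.
have := subsetP (comp_in_sub (B :|: [set a]) a) (g i).
by rewrite /comp_in !inE gi_conn (negbTE gi_a) orbF => /(_ isT).
Qed.

Lemma chain_card_lt (B : {set D}) : a \in B -> (forall i, (0 < i <= k)%N -> g i \in B) ->
  (k < #|B|)%N.
Proof.
move=> aB gB; rewrite -card_chain; apply/subset_leq_card/subsetP => _ /imsetP [i _ ->].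
case: (posnP i) => [-> | i_gt0]; first by rewrite g0.
by apply: gB; rewrite i_gt0 -ltnS ltn_ord.
Qed.

Definition chain_coeff (nu : D -> rat) i : rat := if (i <= k)%N then nu (g i) else 0.

Lemma chain_wpairing_le_start (nu : D -> rat) : (forall x, 0 <= nu x) ->
  wpairing C nu a + chain_coeff nu 1 <= 2 * chain_coeff nu 0.
Proof.
move=> nu_ge0; rewrite /chain_coeff -g0; case: (posnP k) => [-> | k_gt0].
  by have := wpairing_le_nbhd (b := g 0%N) (s := [::]) nu_ge0; rewrite big_nil /=; lra.
have := wpairing_le_nbhd (b := g 0%N) (s := [:: g 1%N]) nu_ge0.
rewrite /= dyn_adj_sym (chain_adj (i := 1)) ?k_gt0 // big_seq1 => /(_ isT isT); lra.
Qed.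

Lemma chain_wpairing_le_inner (nu : D -> rat) i : (forall x, 0 <= nu x) ->
  (0 < i <= k)%N ->
  wpairing C nu (g i) + chain_coeff nu i.-1 + chain_coeff nu i.+1 <= 2 * chain_coeff nu i.
Proof.
case: i => // i nu_ge0 /= ik; rewrite /chain_coeff ik (ltnW ik).
have adj_prev := chain_adj (i := i.+1) ik.
case: (ltnP i.+1 k) => [i_k | k_i].
- have := wpairing_le_nbhd (b := g i.+1) (s := [:: g i; g i.+2]) nu_ge0.
  rewrite /= !inE adj_prev dyn_adj_sym (chain_adj (i := i.+2)) ?i_k // big_cons big_seq1.
  have -> : g i != g i.+2 by apply/eqP => /(chain_inj (ltnW (ltnW i_k)) i_k); lia.
  by move=> /(_ isT isT); lra.
- have := wpairing_le_nbhd (b := g i.+1) (s := [:: g i]) nu_ge0.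
  by rewrite /= adj_prev big_seq1 => /(_ isT isT); lra.
Qed.

End MinimalChain.

End CartanMatrix.

Section Weights.
Variables (D : finType) (C : D -> D -> int).

Lemma wpairingB (lam mu : D -> rat) a :
  wpairing C (fun x => lam x - mu x) a = wpairing C lam a - wpairing C mu a.
Proof. by rewrite /wpairing -sumrB; apply: eq_bigr => x _; rewrite mulrBl. Qed.

Lemma dominant_wpairingB_ltD1 (lam mu : D -> rat) a (m : nat) :
  dominant C lam -> dominant C mu ->
  m%:R < wpairing C (fun x => lam x - mu x) a ->
  m%:R + 1 <= wpairing C (fun x => lam x - mu x) a.
Proof.
move=> /(_ a) [n1 lam_a] /(_ a) [n2 mu_a]; rewrite wpairingB lam_a mu_a.
move=> lt_m; have : (m%:Z < n1%:Z - n2%:Z)%R by rewrite -(ltr_int rat) rmorphB.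
move=> lt_z; have : (m%:Z + 1 <= n1%:Z - n2%:Z)%R by lia.
by rewrite -(ler_int rat) rmorphB rmorphD.
Qed.

Lemma wpairingB_ge0 (lam mu : D -> rat) a :
  dominant C lam -> a \notin wsupp C mu ->
  0 <= wpairing C (fun x => lam x - mu x) a.
Proof.
move=> /(_ a) [n lam_a]; rewrite inE negbK => /eqP mu_a.
by rewrite wpairingB lam_a mu_a subr0 ler0n.
Qed.

End Weights.

Section ConcaveSequence.
Variables (c : nat -> rat) (k r : nat).
Hypotheses (c_end : c k.+1 = 0) (k_lt_r : (k < r)%N)
  (c_start : r%:R + 1 + c 1%N <= 2 * c 0%N)
  (c_concave : forall i, (0 < i <= k)%N -> c i.-1 + c i.+1 <= 2 * c i).

Lemma concave_step i : (i <= k)%N ->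
  (i.+1)%:R * c i.+1 + r%:R + 1 <= (i.+2)%:R * c i.
Proof.
elim: i => [|i IHi] ik; first by have := c_start; rewrite mul1r; lra.
have := c_concave (i := i.+1) ik; rewrite /= => /(ler_wpM2l (ler0n _ i.+2)).
by have := IHi (ltnW ik); rewrite -!(natr1 i.+1) -!(natr1 i); lra.
Qed.

Lemma concave_lower i : (i <= k)%N -> k%:R - i%:R <= c i.+1.
Proof.
suff lower n j : (j + n = k)%N -> n%:R <= c j.+1.
  by move=> ik; rewrite -(subnKC ik) natrD addrC addKr; apply: lower; rewrite subnKC.
elim: n j => [|n IHn] j jn_k; first by move: c_end; rewrite -jn_k addn0 => ->.
have c2_ge := IHn j.+1 (etrans (addSnnS j n) jn_k).
have jk : (j.+1 <= k)%N by rewrite -jn_k addnS ltnS leq_addr.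
have step := concave_step jk.
have r_ge : (j + n.+2)%:R <= r%:R :> rat by rewrite ler_nat addnS jn_k.
have j_ge0 : 0 <= j%:R :> rat := ler0n _ _.
move: step r_ge c2_ge; rewrite natrD -!natr1; nra.
Qed.

Lemma concave_seq_bounds :
  (forall i, (i <= k)%N -> ((i.+1)%:R * c i.+1 + r%:R + 1) / (i.+2)%:R <= c i) /\
  (forall i, (i <= k)%N -> (k%:R - i%:R + 1) + (r%:R - k%:R - 1) / (i.+2)%:R <= c i).
Proof.
have bound_i i : (i <= k)%N -> ((i.+1)%:R * c i.+1 + r%:R + 1) / (i.+2)%:R <= c i.
  by move=> ik; rewrite ler_pdivrMr ?ltr0n // [c i * _]mulrC concave_step.
split=> // i ik; apply: le_trans (bound_i i ik).
have -> : k%:R - i%:R + 1 + (r%:R - k%:R - 1) / (i.+2)%:R =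
          ((i.+1)%:R * (k%:R - i%:R) + r%:R + 1) / (i.+2)%:R :> rat.
  by rewrite -!natr1; field; rewrite !natr1 pnatr_eq0.
apply: ler_wpM2r; first by rewrite invr_ge0 ler0n.
by rewrite !lerD2r ler_wpM2l ?ler0n ?concave_lower.
Qed.

End ConcaveSequence.

Unset Implicit Arguments.

Theorem lemma2p6 (D : finType) (C : D -> D -> int) (HC : is_cartan C)
  (lam mu : D -> rat) (Hlam : dominant C lam) (Hmu : in_Pi C lam mu)
  (a : D) (Ha : a \in wsupp C lam)
  (Hgt : (rk C a)%:R < wpairing C (fun x => lam x - mu x) a)
  (b : D)
  (Hb : extremal C (comp_in C (setU (setD (dyn_comp C a) (wsupp C mu)) [set a]) a) b)
  (k : nat) (g : nat -> D)
  (HI : min_conn_set C [set g (nat_of_ord i) | i : 'I_k.+1] a b)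
  (Hk : dist_is C a b k) (H0 : g 0%N = a)
  (Hadj : forall i : nat, (1 <= i <= k)%N -> C (g i) (g i.-1) != 0) :
  let c := fun i : nat => if (i <= k)%N then lam (g i) - mu (g i) else 0 in
  (forall i : nat, (i <= k)%N ->
     ((i.+1)%:R * c i.+1 + (rk C a)%:R + 1) / (i.+2)%:R <= c i) /\
  (forall i : nat, (i <= k)%N ->
     (k%:R - i%:R + 1) + ((rk C a)%:R - k%:R - 1) / (i.+2)%:R <= c i).
Proof.
move=> c; pose nu x := lam x - mu x.
have nu_ge0 x : 0 <= nu x by case: Hmu => _ /(_ x).
have w_a := dominant_wpairingB_ltD1 Hlam Hmu.1 Hgt.
have gB := chain_in_comp HC H0 Hadj HI Hk (proj1 (andP Hb)).
have w_ge0 i : (0 < i <= k)%N -> 0 <= wpairing C nu (g i).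
  by move=> /gB; rewrite inE => /andP [? _]; apply: wpairingB_ge0.
apply: (concave_seq_bounds (c := chain_coeff k g nu) (r := rk C a)).
- by rewrite /chain_coeff ltnn.
- rewrite /rk; apply: (chain_card_lt H0 HI Hk); first by rewrite inE connect0.
  by move=> i /gB /setDP [].
- by have := chain_wpairing_le_start HC H0 Hadj HI Hk nu_ge0; lra.
- move=> i i_in; have := w_ge0 i i_in.
  by have := chain_wpairing_le_inner HC Hadj HI Hk nu_ge0 i_in; lra.
Qed.
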